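(* If $G$ is a (finite, loopless) multigraph and $v\in V(G)$, then \[\sum_{u\in N(v)}\frac{\mu(uv)}{d(v) + \mu(uv)} \leq \frac{|N(v)|}{1 + |N(v)|}.\]
   Context: $N(v)$ is the set of vertices adjacent to $v$, $\mu(uv)$ is the number of edges of $G$ incident to both $u$ and $v$, and $d(v)=\sum_{u\in N(v)}\mu(uv)$. *)

From mathcomp Require Import all_boot all_order all_algebra.
Set Implicit Arguments. Unset Strict Implicit. Unset Printing Implicit Defensive.

(* A finite loopless multigraph on vertex set V (a finType), given by its
   edge-multiplicity function mu : mu u v = number of edges joining u and v. *)
Record multigraph (V : finType) := Multigraph {
  mu : V -> V -> nat;
  mu_sym : forall u v, mu u v = mu v u;
  mu_loopless : forall v, mu v v = 0
}.

Definition nbhd (V : finType) (G : multigraph V) (v : V) : {set V} :=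
  [set u | 0 < mu G u v].

Definition deg (V : finType) (G : multigraph V) (v : V) : nat :=
  \sum_(u in nbhd G v) mu G u v.

(* The map m |-> m / (d + m) is concave on m >= 0, so it lies below its tangent
   line at the mean value m = d / n.  Summing the tangent bounds over n values
   whose total is d leaves only n times the value at the mean, n / (n + 1). *)
From mathcomp Require Import all_boot all_order all_algebra.
From mathcomp Require Import ring lra.
Import Order.TTheory GRing.Theory Num.Theory.
Local Open Scope ring_scope.

Lemma div_addr_le_tangent (R : realFieldType) (d n m : R) :
  0 < d -> 0 < n -> 0 <= m ->
  m / (d + m) <= (n + 1)^-1 + n ^+ 2 / (d * (n + 1) ^+ 2) * (m - d / n).
Proof.
move=> d_gt0 n_gt0 m_ge0; rewrite -subr_ge0.
have -> : (n + 1)^-1 + n ^+ 2 / (d * (n + 1) ^+ 2) * (m - d / n) - m / (d + m)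
        = (n * m - d) ^+ 2 / (d * (d + m) * (n + 1) ^+ 2).
  by field; rewrite !lt0r_neq0 //; lra.
by rewrite divr_ge0 ?sqr_ge0 // !mulr_ge0 ?sqr_ge0 //; lra.
Qed.

Lemma sum_div_sum_addr_le (R : realFieldType) (I : finType) (A : {pred I})
    (m : I -> R) :
  (forall i, i \in A -> 0 <= m i) ->
  \sum_(i in A) m i / (\sum_(j in A) m j + m i)
    <= #|A|%:R / (1 + #|A|%:R).
Proof.
move=> m_ge0; set d := \sum_(j in A) m j; set n : R := #|A|%:R.
have n_ge0 : 0 <= n by rewrite ler0n.
have [d_eq0 | d_gt0] := eqVneq d 0.
  (* Every term is then 0 / 0, which is 0 in MathComp. *)
  have m_eq0 i : i \in A -> m i = 0 by move/psumr_eq0P: d_eq0; apply.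
  rewrite big1 ?divr_ge0 ?addr_ge0 //.
  by move=> i /m_eq0 ->; rewrite mul0r.
have {}d_gt0 : 0 < d by rewrite lt_def d_gt0 sumr_ge0.
have n_gt0 : 0 < n.
  rewrite ltr0n lt0n; apply: contraTneq d_gt0 => /card0_eq A0.
  by rewrite /d big_pred0 ?ltxx.
pose c := n ^+ 2 / (d * (n + 1) ^+ 2).
apply: (@le_trans _ _ (\sum_(i in A) ((n + 1)^-1 + c * (m i - d / n)))).
  by apply: ler_sum => i Ai; apply: div_addr_le_tangent; last exact: m_ge0.
rewrite big_split /= -(mulr_sumr _ _ _ c) sumrB !sumr_const -/d.
have -> : d / n *+ #|A| = d by rewrite -mulr_natl -/n mulrC divfK ?lt0r_neq0.
by rewrite subrr mulr0 addr0 -mulr_natl -/n addrC.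
Qed.

Theorem lemma6p5 (V : finType) (G : multigraph V) (v : V) :
  \sum_(u in nbhd G v)
      ((mu G u v)%:R / ((deg G v)%:R + (mu G u v)%:R) : rat)
  <= (#|nbhd G v|)%:R / (1 + (#|nbhd G v|)%:R).
Proof.
rewrite /deg natr_sum.
apply: (@sum_div_sum_addr_le _ _ (nbhd G v) (fun u => (mu G u v)%:R)).
by move=> u _; rewrite ler0n.
Qed.
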